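(* Let $S$ be a nonempty set of graphs on $\Pi$. Then for every integer $i$ with $1\le i<\mathrm{eqdom}(S)$, $(i+(n-\mathrm{cov}_i(S)))$-set agreement is solvable in one round on the closed-above model generated by $\mathrm{Sym}(S)$.
   Context: Fix a set of $n$ processes $\Pi=\{p_1,\dots,p_n\}$. A graph is a directed graph with vertex set $\Pi$; every graph is assumed to contain all self-loops $(p,p)$. For a graph $G$ and $p\in\Pi$, $Out_G(p)=\{q:(p,q)\in E(G)\}$ and $In_G(p)=\{q:(q,p)\in E(G)\}$; for $P\subseteq\Pi$, $Out_G(P)=\bigcup_{p\in P}Out_G(p)$. Computation proceeds in failure-free, communication-closed rounds: in each round $r$ a graph $G_r$ is chosen and each process $p$ receives in round $r$ exactly the round-$r$ messages of the processes in $In_{G_r}(p)$. A communication model is a set of infinite sequences of graphs; an execution is allowed iff its sequence of round graphs belongs to the model. For a graph $G$, $\uparrow G=\{H: E(H)\supseteq E(G)\}$. The closed-above model generated by a set $S$ of graphs is $(\bigcup_{G\in S}\uparrow G)^\omega$. $\mathrm{Sym}(S)=\{\pi(G): G\in S,\ \pi \text{ a permutation of }\Pi\}$, where $\pi(G)$ has edges $\{(\pi(u),\pi(v)):(u,v)\in E(G)\}$. In $k$-set agreement each process starts with an input from a totally ordered set $V_{in}$ and must decide a value so that every decided value is the input of some process and at most $k$ distinct values are decided; it is solvable in $r$ rounds on a model if some algorithm guarantees this, with all processes deciding after $r$ rounds, in every allowed execution and for every input assignment. $\mathrm{eqdom}(G)=\min\{i\in[1,n]: \forall P\subseteq\Pi,\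 |P|=i\Rightarrow Out_G(P)=\Pi\}$, $\mathrm{eqdom}(S)=\max_{G\in S}\mathrm{eqdom}(G)$, $\mathrm{cov}_i(G)=\min_{P\subseteq\Pi,|P|=i}|Out_G(P)|$ and $\mathrm{cov}_i(S)=\min_{G\in S}\mathrm{cov}_i(G)$. *)

From HB Require Import structures.
From mathcomp Require Import all_boot all_order.
From mathcomp Require Import fingroup perm.
Set Implicit Arguments. Unset Strict Implicit. Unset Printing Implicit Defensive.

Definition graph (n : nat) := {set ('I_n * 'I_n)}.

Definition has_loops n (G : graph n) : Prop := forall p : 'I_n, (p, p) \in G.

Definition Out n (G : graph n) (p : 'I_n) : {set 'I_n} := [set q | (p, q) \in G].
Definition In n (G : graph n) (p : 'I_n) : {set 'I_n} := [set q | (q, p) \in G].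
Definition OutS n (G : graph n) (P : {set 'I_n}) : {set 'I_n} :=
  \bigcup_(p in P) Out G p.

Definition upG n (G : graph n) : {set graph n} := [set H : {set ('I_n * 'I_n)} | G \subset H].

Definition permG n (pi : {perm 'I_n}) (G : graph n) : graph n :=
  [set (pi e.1, pi e.2) | e in G].

Definition SymG n (S : {set graph n}) : {set graph n} :=
  \bigcup_(pi : {perm 'I_n}) [set permG pi G | G in S].

Definition closed_above_model n (S : {set graph n}) : (nat -> graph n) -> Prop :=
  fun sigma => forall r, exists2 G, G \in S & sigma r \in upG G.

(* eqdom(G) = min { i in [1,n] | forall P, |P| = i -> Out_G(P) = Pi }
   (the min is taken with default n; n always satisfies the condition
    for graphs with self-loops) *)
Definition eqdom_cond n (G : graph n) (i : nat) : bool :=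
  [forall P : {set 'I_n}, (#|P| == i) ==> (OutS G P == [set: 'I_n])].

Definition eqdomG n (G : graph n) : nat :=
  \big[minn/n]_(1 <= i < n.+1 | eqdom_cond G i) i.

Definition eqdom n (S : {set graph n}) : nat := \max_(G in S) eqdomG G.

(* cov_i(G) = min_{|P| = i} |Out_G(P)|  (all values are <= n) *)
Definition covG n (i : nat) (G : graph n) : nat :=
  \big[minn/n]_(P : {set 'I_n} | #|P| == i) #|OutS G P|.

Definition cov n (i : nat) (S : {set graph n}) : nat :=
  \big[minn/n]_(G in S) covG i G.

Definition kset_solvable_1round n (d : Order.disp_t) (Vin : orderType d)
    (model : (nat -> graph n) -> Prop) (k : nat) : Prop :=
  exists (M : Type) (msg : 'I_n -> Vin -> M)
         (dec : 'I_n -> Vin -> ('I_n -> option M) -> Vin),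
  forall sigma, model sigma ->
  forall inp : 'I_n -> Vin,
    let rcv p := fun q => if q \in In (sigma 0%N) p then Some (msg q (inp q)) else None in
    let decision p := dec p (inp p) (rcv p) in
    (forall p, exists q, decision p = inp q) /\
    size (undup [seq decision p | p <- enum 'I_n]) <= k.

(** Each process decides the minimum of the inputs it hears of (its own included).
    Let [P] be a set of [i] processes holding the [i] smallest inputs.  Every
    out-neighbour of [P] in the round graph hears of some input of [P], and since
    that input is at most everything outside [P], it decides an input of [P].  So
    processes in [Out(P)] decide at most [i] values and the others at most
    [n - |Out(P)|] values.  The round graph contains a relabelling of a graph of
    [S], and relabelling preserves the sizes of out-neighbourhoods, so
    [|Out(P)| >= cov_i(S)]. *)

From HB Require Import structures.
From mathcomp Require Import all_boot all_order.
From mathcomp Require Import fingroup perm.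

Set Implicit Arguments. Unset Strict Implicit. Unset Printing Implicit Defensive.
Import Order.TTheory.

Section MinRule.
Variables (I : finType) (d : Order.disp_t) (T : orderType d).

Definition min_rule (x : T) (rcv : I -> option T) : T :=
  \big[Order.min/x]_q odflt x (rcv q).

Lemma min_rule_le x rcv q v : rcv q = Some v -> (min_rule x rcv <= v)%O.
Proof.
by move=> rcv_q; have := bigmin_le x q (fun q => odflt x (rcv q)); rewrite rcv_q.
Qed.

Lemma min_rule_ind (K : T -> Prop) x rcv :
  K x -> (forall q v, rcv q = Some v -> K v) -> K (min_rule x rcv).
Proof.
move=> Kx Krcv; apply: big_ind => //.
- by move=> u v Ku Kv; rewrite minEle; case: ifP.
- by move=> q _; case rcv_q: (rcv q) => [v|] //=; apply: Krcv rcv_q.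
Qed.

Definition lower_set (f : I -> T) (P : {set I}) :=
  forall p q, p \in P -> q \notin P -> (f p <= f q)%O.

Lemma ex_lower_set (f : I -> T) i : i <= #|I| ->
  exists2 P : {set I}, #|P| = i & lower_set f P.
Proof.
move=> le_iI; pose r p q := (f p <= f q)%O.
have r_total : total r by move=> p q; apply: le_total.
have r_trans : transitive r by move=> p q s; apply: le_trans.
pose s := sort r (enum I).
have perm_s : perm_eq s (enum I) by rewrite perm_sort.
have uniq_s : uniq s by rewrite (perm_uniq perm_s) enum_uniq.
have pairwise_s : pairwise r s by rewrite -sorted_pairwise // sort_sorted.
exists [set p in take i s].
  rewrite cardsE (card_uniqP (take_uniq i uniq_s)) size_takel //.
  by rewrite (perm_size perm_s) -cardE.
move=> p q; rewrite !inE => p_low q_high.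
have q_drop : q \in drop i s.
  have : q \in s by rewrite (perm_mem perm_s) mem_enum.
  by rewrite -{1}(cat_take_drop i s) mem_cat (negbTE q_high).
move: pairwise_s; rewrite -{1}(cat_take_drop i s) pairwise_cat.
by case/and3P=> /allrelP take_le_drop _ _; apply: take_le_drop.
Qed.

End MinRule.

Section GraphInvariants.
Variable n : nat.
Implicit Types (G H : graph n) (S : {set graph n}) (P : {set 'I_n}).

Lemma OutS_permG (pi : {perm 'I_n}) G P :
  OutS (permG pi G) (pi @: P) = pi @: OutS G P.
Proof.
apply/setP=> y; apply/bigcupP/imsetP => [[_ /imsetP[p Pp ->]]|[z]].
  rewrite inE => /imsetP[[u v] uvG /= [up yv]].
  exists v => //; apply/bigcupP; exists p => //.
  by rewrite inE (perm_inj up).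
move=> /bigcupP[p Pp]; rewrite inE => pzG ->.
by exists (pi p); [apply: imset_f | rewrite inE; apply: (imset_f _ pzG)].
Qed.

Lemma subset_OutS G H P : G \subset H -> OutS G P \subset OutS H P.
Proof.
move=> subGH; apply/subsetP=> y /bigcupP[p Pp]; rewrite inE => pyG.
by apply/bigcupP; exists p; rewrite // inE (subsetP subGH).
Qed.

Lemma covG_le_OutS i G P : #|P| = i -> covG i G <= #|OutS G P|.
Proof. by move=> cardP; apply: (@bigmin_le_cond _ nat); apply/eqP. Qed.

Lemma cov_le_covG i S G : G \in S -> cov i S <= covG i G.
Proof. exact: (@bigmin_le_cond _ nat). Qed.

Lemma cov_le_OutS i S G (pi : {perm 'I_n}) H P :
  G \in S -> permG pi G \subset H -> #|P| = i -> cov i S <= #|OutS H P|.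
Proof.
move=> GS subH cardP; pose P' := (pi^-1)%g @: P.
have cardP' : #|P'| = i by rewrite card_imset //; apply: perm_inj.
have ->: P = pi @: P'.
  by rewrite -imset_comp (eq_imset _ (permKV pi)) imset_id.
apply: leq_trans (cov_le_covG i GS) (leq_trans (covG_le_OutS G cardP') _).
rewrite -(card_imset _ (@perm_inj _ pi)) -OutS_permG.
exact/subset_leq_card/subset_OutS.
Qed.

Lemma eqdom_le S : eqdom S <= n.
Proof. by apply/bigmax_leqP => G _; apply: (@bigmin_le_id _ nat). Qed.

End GraphInvariants.

Section OneRoundMin.
Variables (n : nat) (d : Order.disp_t) (Vin : orderType d).
Variables (H : graph n) (inp : 'I_n -> Vin).

Definition min_decision (y : 'I_n) : Vin :=
  min_rule (inp y) (fun q => if q \in In H y then Some (inp q) else None).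

Lemma min_decision_input y : exists q, min_decision y = inp q.
Proof.
apply: (min_rule_ind (K := fun v => exists q, v = inp q)) => [|q v].
  by exists y.
by case: ifP => // _ [<-]; exists q.
Qed.

Lemma min_decision_lower P y :
  lower_set inp P -> y \in OutS H P -> min_decision y \in [seq inp p | p in P].
Proof.
move=> lowP /bigcupP[p Pp]; rewrite inE => pyH.
have le_dec_p : (min_decision y <= inp p)%O.
  by apply: min_rule_le; rewrite ifT // inE.
have [q dec_q] := min_decision_input y.
have [Pq|notPq] := boolP (q \in P); first by rewrite dec_q image_f.
suff ->: min_decision y = inp p by rewrite image_f.
by apply/le_anti; rewrite le_dec_p dec_q lowP.
Qed.

Lemma card_min_decisions P : lower_set inp P ->
  size (undup [seq min_decision p | p <- enum 'I_n]) <=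
    #|P| + (n - #|OutS H P|).
Proof.
move=> lowP; set O := OutS H P.
apply: (@leq_trans (size ([seq inp p | p in P] ++ [seq min_decision p | p in ~: O]))).
  apply: uniq_leq_size; first exact: undup_uniq.
  move=> v; rewrite mem_undup => /mapP[p _ ->]; rewrite mem_cat.
  have [Op|notOp] := boolP (p \in O).
    by rewrite (min_decision_lower lowP Op).
  by rewrite image_f ?orbT // inE.
rewrite size_cat !size_image leq_add2l.
by have := cardsC O; rewrite card_ord => cardO; rewrite -[X in _ <= X - _]cardO addKn.
Qed.

End OneRoundMin.

Theorem mainTheorem5 (n : nat) (d : Order.disp_t) (Vin : orderType d)
    (S : {set graph n}) :
  S != set0 ->
  (forall G, G \in S -> has_loops G) ->
  forall i : nat, 1 <= i < eqdom S ->
    kset_solvable_1round Vin (closed_above_model (SymG S)) (i + (n - cov i S)).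
Proof.
move=> _ _ i /andP[_ lt_i_eqdom].
have le_in : i <= #|'I_n|.
  by rewrite card_ord ltnW // (leq_trans lt_i_eqdom (eqdom_le S)).
exists Vin, (fun _ x => x), (fun _ x rcv => min_rule x rcv).
move=> sigma model inp rcv decision; split; first exact: min_decision_input.
have [P cardP lowP] := ex_lower_set inp le_in.
have [_ /bigcupP[pi _ /imsetP[G GS ->]]] := model 0%N.
rewrite inE => subH.
have -> : decision = min_decision (sigma 0%N) inp by [].
apply: leq_trans (card_min_decisions (sigma 0%N) lowP) _.
by rewrite cardP leq_add2l leq_sub2l // (cov_le_OutS GS subH cardP).
Qed.
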